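(* In the transductive setting, let $H$ be a hypothesis set bounded by $B$ and $L$ a uniformly $\beta$-cost-stable algorithm whose returned hypotheses lie in $H$. Let $h$ be the hypothesis returned by $L$ when trained on the random training set $S$ (with test set $T=X\setminus S$). Then for any $\delta>0$, with probability at least $1-\delta$ over the choice of $S$, $$R(h)\le\widehat R(h)+\beta+\Big(2\beta+\frac{B^2(m+u)}{mu}\Big)\sqrt{\frac{\alpha(m,u)\ln\frac1\delta}{2}},\qquad \alpha(m,u)=\frac{mu}{m+u-1/2}\cdot\frac{1}{1-1/(2\max\{m,u\})}.$$
   Context: Transductive setting: a fixed full sample $X=\{x_1,\dots,x_{m+u}\}$ of $m+u$ points, each with a real label $y(x)$. A training set $S\subset X$ of size $m$ is drawn uniformly at random without replacement, its labels are revealed, and $T=X\setminus S$ (of size $u$) is the test set. An algorithm $L$ maps $S$ (with labels) and $T$ to a hypothesis $h_S\colon X\to\mathbb{R}$. Loss: $c(h,x)=(h(x)-y(x))^2$. Training error $\widehat R(h)=\frac1m\sum_{x\in S}c(h,x)$, test error $R(h)=\frac1u\sum_{x\in T}c(h,x)$. Two training sets $S,S'$ differ in exactly one point if $S'=(S\setminus\{x\})\cup\{x'\}$ with $x\in S$, $x'\in X\setminus S$. $L$ is uniformly $\beta$-cost-stable if for all such pairs $S,S'$ and all $x\in X$, $|c(h_{S'},x)-c(h_S,x)|\le\beta$. A hypothesis set $H$ is bounded by $B>0$ if $|h(x)-y(x)|\le B$ for all $h\in H$, $x\in X$. *)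

From mathcomp Require Import all_boot.
From Stdlib Require Import Reals.
Set Implicit Arguments. Unset Strict Implicit.

Definition sumR {n : nat} (A : {set 'I_n}) (f : 'I_n -> R) : R :=
  \big[Rplus/R0]_(i in A) f i.

Definition cost {n : nat} (y : 'I_n -> R) (h : 'I_n -> R) (x : 'I_n) : R :=
  ((h x - y x) ^ 2)%R.

Definition train_err {n : nat} (m : nat) (y h : 'I_n -> R) (S : {set 'I_n}) : R :=
  (sumR S (cost y h) / INR m)%R.

Definition test_err {n : nat} (u : nat) (y h : 'I_n -> R) (S : {set 'I_n}) : R :=
  (sumR (~: S) (cost y h) / INR u)%R.

Definition Rleb (a b : R) : bool := if Rle_dec a b then true else false.

(* probability of event P when S is a uniformly random subset of size m *)
Definition prob_subsets {n : nat} (m : nat) (P : {set 'I_n} -> bool) : R :=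
  (INR #|[set S : {set 'I_n} | (#|S| == m) && P S]|
   / INR #|[set S : {set 'I_n} | #|S| == m]|)%R.

Definition alpha (m u : nat) : R :=
  ((INR m * INR u) / (INR m + INR u - / 2)
   * / (1 - / (2 * Rmax (INR m) (INR u))))%R.

Definition bounded_by {n : nat} (y : 'I_n -> R) (H : ('I_n -> R) -> Prop) (B : R) : Prop :=
  forall h, H h -> forall x, (Rabs (h x - y x) <= B)%R.

Definition cost_stable {n : nat} (m : nat) (y : 'I_n -> R)
  (L : {set 'I_n} -> ('I_n -> R)) (beta : R) : Prop :=
  forall (S : {set 'I_n}) (x x' : 'I_n),
    #|S| = m -> x \in S -> x' \notin S ->
    forall z, (Rabs (cost y (L ((S :\ x) :|: [set x'])) z - cost y (L S) z) <= beta)%R.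

From HB Require Import structures.
From mathcomp Require Import all_boot.
From Stdlib Require Import Reals Lra.
From Coquelicot Require Import Rcomplements Hierarchy Derive AutoDerive.

(** With S a uniform m-subset of the m + u points and gen_gap(S)
    the test error minus the training error of the hypothesis learned from S:
    1. Concentration for uniform k-subsets (McDiarmid's inequality for
       sampling without replacement, after El-Yaniv and Pechyony): revealing
       the elements of S one at a time, each step moves the conditional mean
       of a swap-Lipschitz function within a range bounded by
       [conditional_mean_gap]; Hoeffding's lemma and Chernoff's method give a
       sub-Gaussian tail ([chernoff_ksub]) whose variance proxy is at most
       alpha(m, u) ([var_proxy_alpha]; for m > u one passes to complements).
    2. Stability: E[gen_gap] <= beta ([mean_gen_gap_le], by exchanging a
       training and a test point), and gen_gap changes by at most
       2 beta + B^2 (m + u) / (m u) under such an exchange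
       ([gen_gap_lipschitz]).
    3. [theorem8] applies 1 to gen_gap at t = c sqrt(alpha ln(1/delta) / 2). *)

Set Implicit Arguments.
Unset Strict Implicit.
Open Scope R_scope.

Lemma exp_le x y : x <= y -> exp x <= exp y.
Proof. by case=> [/exp_increasing/Rlt_le | ->]; [| apply: Rle_refl]. Qed.

Lemma Rinv_ge0 x : 0 <= x -> 0 <= / x.
Proof. by case=> [/Rinv_0_lt_compat/Rlt_le | <-]; [| rewrite Rinv_0; apply: Rle_refl]. Qed.

Lemma ratio01 e d : 0 < d -> 0 <= e <= d -> 0 <= e / d <= 1.
Proof.
move=> d_pos e_in; split; first by apply: Rmult_le_pos; [lra | apply/Rinv_ge0; lra].
by apply/(Rmult_le_reg_r d) => //; rewrite /Rdiv Rmult_assoc Rinv_l; lra.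
Qed.

Lemma Rabs_div_le x d K : 0 < d -> Rabs x <= K -> Rabs (x / d) <= K / d.
Proof.
move=> d_pos xK; rewrite /Rdiv Rabs_mult Rabs_inv (Rabs_pos_eq d); last lra.
by apply: Rmult_le_compat_r => //; apply/Rinv_ge0; lra.
Qed.

Lemma INR_pos (n : nat) : (0 < n)%nat -> 0 < INR n.
Proof. by move=> n_gt0; apply/lt_0_INR/ltP. Qed.

Lemma INR_ge1 (n : nat) : (0 < n)%nat -> 1 <= INR n.
Proof. by move=> n_gt0; apply: (le_INR 1); apply/leP. Qed.

Lemma min_at_zero (f df : R -> R) :
  (forall x, is_derive f x (df x)) -> (forall x, 0 <= x * df x) ->
  forall h, f 0 <= f h.
Proof.
move=> f_df df_sign h.
have f_df' c : derivable_pt_lim f c (df c) by apply/is_derive_Reals.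
case: (Rtotal_order 0 h) => [h_gt0 | [<- | h_lt0]].
- have [d [Ed d_in]] := MVT_cor2 f df 0 h h_gt0 (fun c _ => f_df' c).
  have := df_sign d; nra.
- by apply: Rle_refl.
- have [d [Ed d_in]] := MVT_cor2 f df h 0 h_lt0 (fun c _ => f_df' c).
  have := df_sign d; nra.
Qed.

Lemma increment_sign (f df : R -> R) :
  (forall x, is_derive f x (df x)) -> (forall x, 0 <= df x) ->
  forall h, 0 <= h * (f h - f 0).
Proof.
move=> f_df df_ge0 h.
have f_df' c : derivable_pt_lim f c (df c) by apply/is_derive_Reals.
case: (Rtotal_order 0 h) => [h_gt0 | [<- | h_lt0]].
- have [d [Ed d_in]] := MVT_cor2 f df 0 h h_gt0 (fun c _ => f_df' c).
  have := df_ge0 d; nra.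
- by rewrite Rmult_0_l; apply: Rle_refl.
- have [d [Ed d_in]] := MVT_cor2 f df h 0 h_lt0 (fun c _ => f_df' c).
  have := df_ge0 d; nra.
Qed.

Lemma exp_convex l X Y : 0 <= l <= 1 ->
  exp (l * X + (1 - l) * Y) <= l * exp X + (1 - l) * exp Y.
Proof.
move=> l01; set Z := l * X + (1 - l) * Y.
have tangentX := exp_ineq1_le (X - Z); have tangentY := exp_ineq1_le (Y - Z).
have EX : exp X = exp Z * exp (X - Z) by rewrite -exp_plus; f_equal; ring.
have EY : exp Y = exp Z * exp (Y - Z) by rewrite -exp_plus; f_equal; ring.
have EZ : l * (exp Z * (1 + (X - Z))) + (1 - l) * (exp Z * (1 + (Y - Z))) = exp Z.
  by rewrite /Z; ring.
have EZpos := exp_pos Z.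
have boundX : exp Z * (1 + (X - Z)) <= exp Z * exp (X - Z).
  by apply: Rmult_le_compat_l; lra.
have boundY : exp Z * (1 + (Y - Z)) <= exp Z * exp (Y - Z).
  by apply: Rmult_le_compat_l; lra.
rewrite EX EY; nra.
Qed.

(** The two-point case of Hoeffding's lemma:
    (1 - p) e^(-p h) + p e^((1 - p) h) <= e^(h^2/8) for 0 <= p <= 1.
    Writing the left side as e^(-p h) D(h), this says that
    G(h) = h^2/8 + p h - ln D(h) is nonnegative; G(0) = G'(0) = 0 and
    G'' = 1/4 - q (1 - q) >= 0 with q = p e^h / D(h). *)
Section TwoPointHoeffding.
Variable p : R.
Hypothesis p01 : 0 <= p <= 1.

Let D h := 1 - p + p * exp h.

Lemma D_pos h : 0 < D h.
Proof. by rewrite /D; have := exp_pos h; nra. Qed.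

Let G h := h * h / 8 + p * h - ln (D h).
Let G' h := h / 4 + p - p * exp h / D h.
Let G'' h := / 4 - (1 - p) * (p * exp h) / (D h * D h).

Lemma G_derive h : is_derive G h (G' h).
Proof.
have := D_pos h; rewrite /G /G' /D => Dh.
by auto_derive; [lra | field; lra].
Qed.

Lemma G'_derive h : is_derive G' h (G'' h).
Proof.
have := D_pos h; rewrite /G' /G'' /D => Dh.
by auto_derive; [lra | field; lra].
Qed.

Lemma G''_ge0 h : 0 <= G'' h.
Proof.
have Dh := D_pos h.
have -> : G'' h = (1 - p - p * exp h) ^ 2 / (4 * (D h * D h)).
  by rewrite /G'' /D in Dh *; field; lra.
apply: Rmult_le_pos; first by apply: pow2_ge_0.
by apply/Rlt_le/Rinv_0_lt_compat; nra.
Qed.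

Lemma two_point_hoeffding h :
  (1 - p) * exp (- p * h) + p * exp ((1 - p) * h) <= exp (h * h / 8).
Proof.
have G'0 : G' 0 = 0 by rewrite /G' /D exp_0; field; lra.
have G0 : G 0 = 0.
  by rewrite /G /D exp_0 (_ : 1 - p + p * 1 = 1) ?ln_1; [field | ring].
have G'_sign x : 0 <= x * G' x.
  by have := increment_sign G'_derive G''_ge0 x; rewrite G'0 Rminus_0_r.
have G_ge0 : 0 <= G h by rewrite -G0; apply: (min_at_zero G_derive G'_sign).
have -> : (1 - p) * exp (- p * h) + p * exp ((1 - p) * h) = exp (- p * h) * D h.
  by rewrite /D (_ : (1 - p) * h = - p * h + h) ?exp_plus; ring.
have -> : exp (h * h / 8) = exp (G h) * (exp (- p * h) * D h).
  rewrite -[D h in RHS]exp_ln; last by apply: D_pos.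
  by rewrite -!exp_plus; f_equal; rewrite /G; ring.
have expG_ge1 : 1 <= exp (G h) by have := exp_ineq1_le (G h); lra.
have := Rmult_le_pos _ _ (Rlt_le _ _ (exp_pos (- p * h))) (Rlt_le _ _ (D_pos h)).
nra.
Qed.

End TwoPointHoeffding.

(* Rplus is a commutative monoid law, so that the bigop library applies to
   real sums. *)
HB.instance Definition _ := Monoid.isComLaw.Build R 0 Rplus
  (fun a b c => esym (Rplus_assoc a b c)) Rplus_comm Rplus_0_l.

Section RealSums.
Variable I : finType.
Implicit Types (P : pred I) (F G : I -> R).

Lemma bigR_scale P c F :
  \big[Rplus/0]_(i | P i) (c * F i) = c * \big[Rplus/0]_(i | P i) F i.
Proof. by apply: (big_rec2 (fun a b => a = c * b)) => [|i a b _ ->]; ring. Qed.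

Lemma bigR_opp P F :
  \big[Rplus/0]_(i | P i) (- F i) = - \big[Rplus/0]_(i | P i) F i.
Proof. by apply: (big_rec2 (fun a b => a = - b)) => [|i a b _ ->]; ring. Qed.

Lemma bigR_sub P F G :
  \big[Rplus/0]_(i | P i) (F i - G i) =
  \big[Rplus/0]_(i | P i) F i - \big[Rplus/0]_(i | P i) G i.
Proof. by rewrite /Rminus big_split /= bigR_opp. Qed.

Lemma bigR_le P F G : (forall i, P i -> F i <= G i) ->
  \big[Rplus/0]_(i | P i) F i <= \big[Rplus/0]_(i | P i) G i.
Proof.
move=> FG; apply: (big_rec2 (fun a b => a <= b)) => [|i a b Pi ab].
  exact: Rle_refl.
by have := FG i Pi; lra.
Qed.

Lemma bigR_const (A : {pred I}) c : \big[Rplus/0]_(i in A) c = INR #|A| * c.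
Proof.
rewrite big_const; elim: #|A| => [|n IHn]; first by rewrite /=; ring.
by rewrite iterS IHn S_INR; ring.
Qed.

Lemma bigR_setD1 (A : {set I}) x F : x \in A ->
  \big[Rplus/0]_(i in A) F i = F x + \big[Rplus/0]_(i in A :\ x) F i.
Proof. exact: big_setD1. Qed.

End RealSums.

(* The uniform average of f over a finite set A (0 when A is empty). *)
Definition mean {T : finType} (A : {set T}) (f : T -> R) : R :=
  \big[Rplus/0]_(x in A) f x / INR #|A|.

Section Mean.
Variables (T : finType) (A : {set T}).
Implicit Types (f g : T -> R).

Lemma mean_ext f g : {in A, f =1 g} -> mean A f = mean A g.
Proof. by move=> fg; rewrite /mean (eq_bigr _ fg). Qed.

Lemma mean_le f g : {in A, forall x, f x <= g x} -> mean A f <= mean A g.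
Proof.
move=> fg; apply: Rmult_le_compat_r; first by apply/Rinv_ge0/pos_INR.
exact: bigR_le.
Qed.

Lemma mean_affine a b f : (0 < #|A|)%nat ->
  mean A (fun x => a + b * f x) = a + b * mean A f.
Proof.
move=> A_gt0; have := INR_pos A_gt0 => A_pos.
by rewrite /mean big_split /= bigR_const bigR_scale; field; lra.
Qed.

Lemma mean_const c : (0 < #|A|)%nat -> mean A (fun _ => c) = c.
Proof.
move=> A_gt0; have := INR_pos A_gt0 => A_pos.
by rewrite /mean bigR_const; field; lra.
Qed.

Lemma mean_scale c f : mean A (fun x => c * f x) = c * mean A f.
Proof. by rewrite /mean bigR_scale /Rdiv Rmult_assoc. Qed.

Lemma mean_add f g : mean A (fun x => f x + g x) = mean A f + mean A g.
Proof. by rewrite /mean big_split /= /Rdiv Rmult_plus_distr_r. Qed.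

Lemma mean_indicatorC (P : pred T) : (0 < #|A|)%nat ->
  mean A (fun x => if P x then 1 else 0) =
  1 - mean A (fun x => if ~~ P x then 1 else 0).
Proof.
move=> A_gt0.
suff : mean A (fun x => if P x then 1 else 0)
       + mean A (fun x => if ~~ P x then 1 else 0) = 1 by lra.
rewrite -mean_add -[RHS](mean_const 1 A_gt0); apply: mean_ext => x _.
by case: (P x) => /=; ring.
Qed.

End Mean.

Lemma seq_argmin (T : eqType) (a : T -> R) (s : seq T) : s != [::] ->
  exists2 x, x \in s & forall y, y \in s -> a x <= a y.
Proof.
elim: s => [//|z [|w s] IHs] _.
  by exists z => [|y]; rewrite ?mem_seq1 ?eqxx // => /eqP ->; apply: Rle_refl.
have [x x_in x_min] := IHs isT.
case: (Rle_lt_dec (a z) (a x)) => [zx | xz].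
- exists z; first by rewrite inE eqxx.
  move=> y; rewrite inE => /predU1P [-> | y_in]; first by apply: Rle_refl.
  by apply: Rle_trans zx (x_min y y_in).
- exists x; first by rewrite inE x_in orbT.
  move=> y; rewrite inE => /predU1P [-> | y_in]; [by apply: Rlt_le | exact: x_min].
Qed.

Lemma exists_argmin (T : finType) (A : {set T}) (a : T -> R) :
  (0 < #|A|)%nat -> exists2 x, x \in A & forall y, y \in A -> a x <= a y.
Proof.
move=> A_gt0; have [|x x_in x_min] := @seq_argmin _ a (enum A).
  by rewrite -size_eq0 -cardE -lt0n.
by exists x => [|y y_in]; [rewrite -mem_enum | apply: x_min; rewrite mem_enum].
Qed.

Lemma exp_chord s w lo hi v : lo < hi -> lo <= v <= hi ->
  exp (s * (v - w)) <= exp (s * (lo - w))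
    + (v - lo) * ((exp (s * (hi - w)) - exp (s * (lo - w))) / (hi - lo)).
Proof.
move=> lo_hi v_in; set l := (hi - v) / (hi - lo).
have l01 : 0 <= l <= 1 by apply: ratio01; lra.
have -> : s * (v - w) = l * (s * (lo - w)) + (1 - l) * (s * (hi - w)).
  by rewrite /l; field; lra.
apply: Rle_trans (exp_convex _ _ l01) _; apply: Req_le.
by rewrite /l; field; lra.
Qed.

(** Averaging the chord
    bound of [exp_chord] reduces the claim to the two-point case, with
    p = (E[a] - lo) / (hi - lo). *)
Lemma hoeffding_lemma (T : finType) (U : {set T}) (a : T -> R) (r s : R) :
  (0 < #|U|)%nat -> (forall x y, x \in U -> y \in U -> a x - a y <= r) ->
  mean U (fun x => exp (s * (a x - mean U a))) <= exp (s * s * (r * r) / 8).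
Proof.
move=> U_gt0 range_a.
have [lo lo_in lo_min] := exists_argmin a U_gt0.
have [hi hi_in hi_max] := exists_argmin (fun x => - a x) U_gt0.
have {}hi_max y : y \in U -> a y <= a hi by move=> y_in; have := hi_max y y_in; lra.
set abar := mean U a; set d := a hi - a lo.
have abar_lo : a lo <= abar.
  by rewrite -(mean_const (a lo) U_gt0); apply: mean_le => x /lo_min.
have abar_hi : abar <= a hi.
  by rewrite -(mean_const (a hi) U_gt0); apply: mean_le => x /hi_max.
apply: Rle_trans (_ : exp (s * d * (s * d) / 8) <= _); last first.
  have d_ge0 : 0 <= d by have := lo_min hi hi_in; rewrite /d; lra.
  have d_le_r : d <= r by apply: range_a.
  have := Rmult_le_pos (s * s) ((r - d) * (r + d)) (Rle_0_sqr s) ltac:(nra).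
  by move=> ?; apply: exp_le; lra.
case: (Req_dec d 0) => [d0 | dn0].
  rewrite d0 Rmult_0_r Rmult_0_l /Rdiv Rmult_0_l exp_0.
  rewrite -[1](mean_const 1 U_gt0); apply: mean_le => x x_in.
  have -> : a x = abar.
    by move: d0; rewrite /d; have := lo_min x x_in; have := hi_max x x_in; lra.
  by rewrite Rminus_diag Rmult_0_r exp_0; apply: Rle_refl.
have d_pos : 0 < d by move: dn0; have := lo_min hi hi_in; rewrite /d; lra.
set p := (abar - a lo) / d.
have p01 : 0 <= p <= 1 by apply: ratio01 => //; rewrite /d; lra.
set eX := exp (s * (a lo - abar)); set eY := exp (s * (a hi - abar)).
have chord x : x \in U ->
    exp (s * (a x - abar)) <= (eX - a lo * ((eY - eX) / d)) + ((eY - eX) / d) * a x.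
  move=> x_in; have lo_hi : a lo < a hi by move: d_pos; rewrite /d; lra.
  apply: Rle_trans (exp_chord s abar lo_hi (conj (lo_min x x_in) (hi_max x x_in))) _.
  by apply: Req_le; rewrite -/eX -/eY -/d; ring.
apply: Rle_trans (mean_le chord) _; rewrite mean_affine //.
apply: Rle_trans (two_point_hoeffding p01 (s * d)); apply: Req_le.
have -> : - p * (s * d) = s * (a lo - abar) by rewrite /p; field.
have -> : (1 - p) * (s * d) = s * (a hi - abar).
  by move: d_pos; rewrite /p /d => ?; field; lra.
by rewrite -/eX -/eY -/abar /p; field.
Qed.

(** Uniformly random k-subsets of a finite set U, revealed one element at a
    time.  Averages over k-subsets are [mean (ksub U k)]. *)
Definition ksub (T : finType) (U : {set T}) (k : nat) : {set {set T}} :=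
  [set S : {set T} | S \subset U & #|S| == k].

Section KSubsets.
Variable T : finType.
Implicit Types (U S : {set T}) (f g : {set T} -> R).

Lemma card_ksub U k : #|ksub U k| = 'C(#|U|, k).
Proof. exact: cards_draws. Qed.

Lemma ksub_gt0 U k : (k <= #|U|)%nat -> (0 < #|ksub U k|)%nat.
Proof. by rewrite card_ksub bin_gt0. Qed.

Lemma mean_ksub0 U f : mean (ksub U 0) f = f set0.
Proof.
have -> : ksub U 0 = [set set0].
  apply/setP => S; rewrite !inE cards_eq0.
  by apply/andP/eqP => [[_ /eqP] | ->] //; rewrite sub0set.
by rewrite /mean big_set1 cards1 /= /Rdiv Rinv_1 Rmult_1_r.
Qed.

Lemma sum_ksub_insert U k x f : x \in U ->
  \big[Rplus/0]_(S in ksub (U :\ x) k) f (x |: S) =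
  \big[Rplus/0]_(S in ksub U k.+1 | x \in S) f S.
Proof.
move=> xU; symmetry.
rewrite (reindex_onto (fun S => x |: S) (fun S => S :\ x)); last first.
  by move=> S /andP [_ xS]; rewrite setD1K.
apply: eq_bigl => S; rewrite !inE eqxx andbT subUset sub1set xU subsetD1.
case xS: (x \in S) => /=.
  rewrite andbF; apply/negbTE/negP => /andP [_ /eqP E].
  by have := setD11 x (x |: S); rewrite E xS.
by rewrite setU1K ?xS // eqxx andbT cardsU1 xS andbT.
Qed.

Lemma mean_ksub_first U k f : (k < #|U|)%nat ->
  mean (ksub U k.+1) f =
  mean U (fun x => mean (ksub (U :\ x) k) (fun S => f (x |: S))).
Proof.
move=> k_lt; set N := #|U|.
have double_count : \big[Rplus/0]_(x in U) \big[Rplus/0]_(S in ksub (U :\ x) k) f (x |: S)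
    = INR k.+1 * \big[Rplus/0]_(S in ksub U k.+1) f S.
  under eq_bigr => x xU do rewrite sum_ksub_insert // big_mkcondr.
  rewrite exchange_big -bigR_scale; apply: eq_bigr => S.
  rewrite inE => /andP [SU /eqP cardS].
  rewrite -big_mkcondr (eq_bigl (mem S)) ?bigR_const ?cardS //.
  by move=> x; rewrite /= andb_idl // => /(subsetP SU).
rewrite [RHS]/mean (eq_bigr (fun x => / INR 'C(N.-1, k) *
    \big[Rplus/0]_(S in ksub (U :\ x) k) f (x |: S))); last first.
  move=> x xU; have card_Ux : #|U :\ x| = N.-1 by rewrite /N (cardsD1 x U) xU.
  by rewrite /mean card_ksub card_Ux Rmult_comm.
rewrite bigR_scale double_count /mean card_ksub -/N.
have N_gt0 : (0 < N)%nat by apply: leq_trans k_lt.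
have binN1 : (0 < 'C(N.-1, k))%nat by rewrite bin_gt0 -ltnS prednK.
have binN : (0 < 'C(N, k.+1))%nat by rewrite bin_gt0.
have Pascal : INR N * INR 'C(N.-1, k) = INR k.+1 * INR 'C(N, k.+1).
  by rewrite -!mult_INR; congr INR; apply: mul_bin_diag.
have := INR_pos N_gt0; have := INR_pos binN1; have := INR_pos binN.
have := INR_pos (ltn0Sn k) => ? ? ? ?.
apply: (Rmult_eq_reg_l (INR N * INR 'C(N.-1, k))); last by nra.
by rewrite {1}Pascal; field; lra.
Qed.

End KSubsets.

Definition swap_lipschitz (T : finType) (U : {set T}) (k : nat) (c : R)
    (g : {set T} -> R) : Prop :=
  forall S x z, S \in ksub U k -> x \in S -> z \in U -> z \notin S ->
  Rabs (g S - g (S :\ x :|: [set z])) <= c.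

Section ConditionalMeans.
Variable T : finType.
Implicit Types (U S : {set T}) (g : {set T} -> R).

Lemma swap_lipschitz_insert U k c g x : x \in U ->
  swap_lipschitz U k.+1 c g -> swap_lipschitz (U :\ x) k c (fun S => g (x |: S)).
Proof.
move=> xU g_lip S y z; rewrite !inE subsetD1 => /andP [/andP [SU xS] /eqP cardS].
move=> yS /andP [zx zU] zS.
have yx : y != x by apply: contraNneq xS => <-.
have -> : x |: (S :\ y :|: [set z]) = (x |: S) :\ y :|: [set z].
  by apply/setP => w; rewrite !inE; case: (w =P x) => [-> |] //=; rewrite eq_sym yx.
apply: g_lip; rewrite ?inE ?yS ?orbT ?zU ?negb_or ?zx //.
by rewrite subUset sub1set xU SU cardsU1 xS cardS add1n eqxx.
Qed.

Lemma sum_ksub_insert_split U k a b g : a \in U -> b \in U -> a != b ->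
  \big[Rplus/0]_(S in ksub (U :\ a) k) g (a |: S) =
  \big[Rplus/0]_(S in ksub U k.+1 | (a \in S) && (b \in S)) g S +
  \big[Rplus/0]_(S in ksub ((U :\ b) :\ a) k) g (a |: S).
Proof.
move=> aU bU ab; have aUb : a \in U :\ b by rewrite !inE ab aU.
rewrite sum_ksub_insert // (bigID (fun S => b \in S)) /= sum_ksub_insert //.
congr Rplus; apply: eq_bigl => S; rewrite !inE ?subsetD1;
  by case: (S \subset U); case: (#|S| == k.+1); case: (a \in S); case: (b \in S).
Qed.

(* The sums of g over the (k+1)-subsets containing x and over those
   containing y differ only on subsets avoiding the other point, where they are
   matched by exchanging x and y. *)
Lemma conditional_sum_gap U k c g x y :
  swap_lipschitz U k.+1 c g -> x \in U -> y \in U -> x != y ->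
  \big[Rplus/0]_(S in ksub (U :\ x) k) g (x |: S) -
  \big[Rplus/0]_(S in ksub (U :\ y) k) g (y |: S)
  <= c * INR #|ksub ((U :\ x) :\ y) k|.
Proof.
move=> g_lip xU yU xy.
have swap_bound S : S \in ksub ((U :\ x) :\ y) k -> g (x |: S) - g (y |: S) <= c.
  rewrite !inE !subsetD1 => /andP [/andP [/andP [SU xS] yS] /eqP cardS].
  have := g_lip (x |: S) x y; rewrite setU1K // [S :|: _]setUC.
  move=> /(_ _ (setU11 x S) yU) bound; apply: Rle_trans (Rle_abs _) (bound _ _).
    by rewrite inE subUset sub1set xU SU cardsU1 xS cardS add1n eqxx.
  by rewrite !inE negb_or eq_sym xy.
rewrite (sum_ksub_insert_split _ _ xU yU xy).
rewrite (sum_ksub_insert_split _ _ yU xU); last by rewrite eq_sym.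
have -> : \big[Rplus/0]_(S in ksub U k.+1 | (y \in S) && (x \in S)) g S =
          \big[Rplus/0]_(S in ksub U k.+1 | (x \in S) && (y \in S)) g S.
  by apply: eq_bigl => S; rewrite [(y \in S) && _]andbC.
have -> : (U :\ y) :\ x = (U :\ x) :\ y by apply/setP => w; rewrite !inE andbCA.
rewrite (_ : forall a b d, a + b - (a + d) = b - d); last by move=> *; ring.
rewrite -bigR_sub; apply: Rle_trans (bigR_le swap_bound) _.
by rewrite bigR_const Rmult_comm; apply: Rle_refl.
Qed.

(* Conditioning on x or on y changes the mean of g by at most
   c (N - k - 1) / (N - 1), the fraction of the k-subsets of U \ {x} that
   avoid y. *)
Lemma conditional_mean_gap U k c g x y : (k < #|U|)%nat ->
  swap_lipschitz U k.+1 c g -> x \in U -> y \in U -> x != y ->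
  mean (ksub (U :\ x) k) (fun S => g (x |: S)) -
  mean (ksub (U :\ y) k) (fun S => g (y |: S))
  <= c * (INR (#|U| - k.+1) / INR #|U|.-1).
Proof.
move=> k_lt g_lip xU yU xy; set M := #|U|.-1.
have yUx : y \in U :\ x by rewrite !inE eq_sym xy yU.
have card_Ux : #|U :\ x| = M by rewrite /M (cardsD1 x U) xU.
have card_Uy : #|U :\ y| = M by rewrite /M (cardsD1 y U) yU.
have card_W : #|(U :\ x) :\ y| = M.-1.
  by move: (cardsD1 y (U :\ x)); rewrite yUx card_Ux add1n => ->.
have N_eq : #|U| = M.+1 by rewrite /M prednK //; apply: leq_trans k_lt.
have M_gt0 : (0 < M)%nat by rewrite -card_Ux; apply/card_gt0P; exists y.
have binM_gt0 : (0 < 'C(M, k))%nat by rewrite bin_gt0 -ltnS -N_eq.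
have := INR_pos M_gt0; have := INR_pos binM_gt0 => bin_pos M_pos.
have ratio : INR (M - k) / INR M = INR 'C(M.-1, k) / INR 'C(M, k).
  have absorption : INR M * INR 'C(M.-1, k) = INR (M - k) * INR 'C(M, k).
    by rewrite -!mult_INR; congr INR; apply: mul_bin_down.
  by apply: (Rmult_eq_reg_r (INR M * INR 'C(M, k))); [field_simplify; lra | nra].
rewrite /mean !card_ksub card_Ux card_Uy N_eq subSS /= ratio.
rewrite /Rdiv -Rmult_minus_distr_r -Rmult_assoc.
apply: Rmult_le_compat_r; first by apply/Rinv_ge0; lra.
by rewrite -card_W -card_ksub; apply: conditional_sum_gap.
Qed.

End ConditionalMeans.

(** The
    i-th revealed element moves the conditional mean within a range
    c (N_i - k_i) / (N_i - 1) (Lemma [conditional_mean_gap]), where N_i and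
    k_i are the sizes still to be drawn from; [var_proxy N k] is the sum of
    the squares of these ratios. *)
Fixpoint var_proxy (N k : nat) : R :=
  if k is k'.+1 then (INR (N - k) / INR N.-1) ^ 2 + var_proxy N.-1 k' else 0.

Section McDiarmid.
Variable T : finType.
Implicit Types (U S : {set T}) (g : {set T} -> R).

(* Moment generating function bound, by induction on k through the
   decomposition [mean_ksub_first] and Hoeffding's lemma. *)
Lemma mgf_ksub k U c g s : (k <= #|U|)%nat -> 0 <= c -> swap_lipschitz U k c g ->
  mean (ksub U k) (fun S => exp (s * (g S - mean (ksub U k) g)))
  <= exp (s * s * (c * c) * var_proxy #|U| k / 8).
Proof.
elim: k U g => [|k IHk] U g k_le c_ge0 g_lip.
  rewrite !mean_ksub0 Rminus_diag Rmult_0_r /= exp_0 -exp_0.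
  by apply: exp_le; rewrite Rmult_0_r /Rdiv Rmult_0_l; apply: Rle_refl.
set N := #|U|; have U_gt0 : (0 < N)%nat by apply: leq_trans k_le.
pose a x := mean (ksub (U :\ x) k) (fun S => g (x |: S)).
have mean_a : mean (ksub U k.+1) g = mean U a by rewrite mean_ksub_first.
set rho := INR (N - k.+1) / INR N.-1.
have rho_ge0 : 0 <= rho by apply: Rmult_le_pos; [apply: pos_INR | apply/Rinv_ge0/pos_INR].
have a_range x y : x \in U -> y \in U -> a x - a y <= c * rho.
  move=> xU yU; case: (eqVneq x y) => [-> | xy]; last exact: conditional_mean_gap.
  by rewrite Rminus_diag; apply: Rmult_le_pos.
set W := exp (s * s * (c * c) * var_proxy N.-1 k / 8).
have step x : x \in U ->
    mean (ksub (U :\ x) k) (fun S => exp (s * (g (x |: S) - mean U a)))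
    <= W * exp (s * (a x - mean U a)).
  move=> xU; have card_Ux : #|U :\ x| = N.-1 by rewrite /N (cardsD1 x U) xU.
  have -> : mean (ksub (U :\ x) k) (fun S => exp (s * (g (x |: S) - mean U a))) =
      exp (s * (a x - mean U a)) *
      mean (ksub (U :\ x) k) (fun S => exp (s * (g (x |: S) - a x))).
    by rewrite -mean_scale; apply: mean_ext => S _; rewrite -exp_plus; f_equal; ring.
  rewrite Rmult_comm; apply: Rmult_le_compat_r; first exact/Rlt_le/exp_pos.
  rewrite /W -card_Ux; apply: IHk => //; last exact: swap_lipschitz_insert.
  by rewrite card_Ux -ltnS prednK.
rewrite mean_a mean_ksub_first //; apply: Rle_trans (mean_le step) _.
rewrite mean_scale; apply: Rle_trans (_ : W * exp (s * s * (c * rho * (c * rho)) / 8) <= _).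
  by apply: Rmult_le_compat_l; [exact/Rlt_le/exp_pos | exact: hoeffding_lemma].
have -> : var_proxy N k.+1 = rho ^ 2 + var_proxy N.-1 k by [].
rewrite /W -exp_plus; apply: Req_le; f_equal.
by rewrite /Rdiv; ring.
Qed.

(* Chernoff's method, with the exponential moment taken at s = 4 t / (c^2 V). *)
Lemma chernoff_ksub U k c g t (E : pred {set T}) :
  (k <= #|U|)%nat -> 0 <= c -> swap_lipschitz U k c g ->
  0 < c * c * var_proxy #|U| k -> 0 <= t ->
  (forall S, S \in ksub U k -> E S -> t <= g S - mean (ksub U k) g) ->
  mean (ksub U k) (fun S => if E S then 1 else 0)
  <= exp (- (2 * (t * t)) / (c * c * var_proxy #|U| k)).
Proof.
move=> k_le c_ge0 g_lip v_pos t_ge0 E_dev.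
set v := c * c * var_proxy #|U| k in v_pos *; set gbar := mean (ksub U k) g in E_dev *.
set s := 4 * t / v.
have s_ge0 : 0 <= s by apply: Rmult_le_pos; [lra | apply/Rinv_ge0; lra].
apply: Rle_trans (_ : mean (ksub U k)
    (fun S => exp (- (s * t)) * exp (s * (g S - gbar))) <= _).
  apply: mean_le => S S_in; rewrite -exp_plus.
  case: ifP => [ES | _]; last exact/Rlt_le/exp_pos.
  have := E_dev S S_in ES => dev.
  have : 0 <= s * (g S - gbar - t) by apply: Rmult_le_pos; lra.
  by have := exp_ineq1_le (- (s * t) + s * (g S - gbar)); lra.
rewrite mean_scale; apply: Rle_trans (_ : exp (- (s * t)) *
    exp (s * s * (c * c) * var_proxy #|U| k / 8) <= _).
  by apply: Rmult_le_compat_l; [exact/Rlt_le/exp_pos | exact: mgf_ksub].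
have -> : s * s * (c * c) * var_proxy #|U| k / 8 = s * s * v / 8.
  by rewrite /v /Rdiv; ring.
by rewrite -exp_plus; apply: Req_le; f_equal; rewrite /s; field; lra.
Qed.

End McDiarmid.

Lemma var_proxy_ge0 N k : 0 <= var_proxy N k.
Proof.
elim: k N => [|k IHk] N /=; first exact: Rle_refl.
by have := IHk N.-1; have := pow2_ge_0 (INR (N - k.+1) / INR N.-1); lra.
Qed.

Lemma var_proxyS w k :
  var_proxy (w + k.+1) k.+1 = (INR w / INR (w + k)) ^ 2 + var_proxy (w + k) k.
Proof. by rewrite /= addnS subSS addnK. Qed.

Lemma var_proxy_pos w k : (0 < w)%nat -> (0 < k)%nat -> 0 < var_proxy (w + k) k.
Proof.
move=> w_gt0; case: k => [//|k] _; rewrite var_proxyS.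
have wk_gt0 : (0 < w + k)%nat by rewrite addn_gt0 w_gt0.
have : 0 < INR w / INR (w + k) by apply: Rdiv_lt_0_compat; apply: INR_pos.
by have := var_proxy_ge0 (w + k) k; nra.
Qed.

(* Comparing the sum of (w / j)^2 with the integral of w^2 / x^2: the
   telescoping bound 1 / j^2 <= 1 / (j - 1/2) - 1 / (j + 1/2). *)
Lemma var_proxy_le w k : (0 < w)%nat ->
  var_proxy (w + k) k <= INR w ^ 2 * (/ (INR w - / 2) - / (INR (w + k) - / 2)).
Proof.
move=> w_gt0; have w_ge1 := INR_ge1 w_gt0.
elim: k => [|k IHk]; first by rewrite addn0 /= Rminus_diag; lra.
rewrite var_proxyS addnS S_INR.
have j_ge1 : 1 <= INR (w + k) by apply: INR_ge1; rewrite addn_gt0 w_gt0.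
move: IHk j_ge1 w_ge1; set j := INR (w + k); set x := INR w => IHk j_ge1 x_ge1.
have telescope : / (j * j) <= / (j - / 2) - / (j + 1 - / 2).
  have -> : / (j - / 2) - / (j + 1 - / 2) = / (j * j - / 4).
    by field; repeat split; nra.
  by apply: Rinv_le_contravar; [nra | lra].
have -> : (x / j) ^ 2 = x ^ 2 * / (j * j) by field; lra.
by have := Rmult_le_compat_l _ _ _ (pow2_ge_0 x) telescope; lra.
Qed.

Lemma alpha_sym m u : alpha m u = alpha u m.
Proof. by rewrite /alpha Rmax_comm (Rplus_comm (INR m)) (Rmult_comm (INR m)). Qed.

Lemma alpha_pos m u : (0 < m)%nat -> (0 < u)%nat -> 0 < alpha m u.
Proof.
move=> /INR_ge1 m_ge1 /INR_ge1 u_ge1.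
have max_ge1 : 1 <= Rmax (INR m) (INR u) by apply: Rle_trans u_ge1 (Rmax_r _ _).
apply: Rmult_lt_0_compat; first by apply: Rdiv_lt_0_compat; nra.
apply: Rinv_0_lt_compat.
have : / (2 * Rmax (INR m) (INR u)) <= / 2 by apply: Rinv_le_contravar; lra.
by lra.
Qed.

Lemma var_proxy_alpha w k : (0 < k)%nat -> (k <= w)%nat -> var_proxy (w + k) k <= alpha k w.
Proof.
move=> k_gt0 k_le_w; have w_gt0 : (0 < w)%nat by apply: leq_trans k_le_w.
apply: Rle_trans (var_proxy_le k w_gt0) _; apply: Req_le.
have := INR_ge1 k_gt0; have := INR_ge1 w_gt0 => w_ge1 k_ge1.
rewrite /alpha Rmax_right ?plus_INR; last by apply/le_INR/leP.
by field; repeat split; lra.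
Qed.

Lemma mcdiarmid_ksub (T : finType) (U : {set T}) w k c (g : {set T} -> R) t
    (E : pred {set T}) :
  #|U| = (w + k)%nat -> (0 < k)%nat -> (k <= w)%nat -> 0 < c -> 0 <= t ->
  swap_lipschitz U k c g ->
  (forall S, S \in ksub U k -> E S -> t <= g S - mean (ksub U k) g) ->
  mean (ksub U k) (fun S => if E S then 1 else 0)
  <= exp (- (2 * (t * t)) / (c * c * alpha k w)).
Proof.
move=> cardU k_gt0 k_le_w c_pos t_ge0 g_lip E_dev.
have w_gt0 : (0 < w)%nat by apply: leq_trans k_le_w.
have v_pos := var_proxy_pos w_gt0 k_gt0.
have v_le := var_proxy_alpha k_gt0 k_le_w.
have cc_pos : 0 < c * c by nra.
apply: Rle_trans (chernoff_ksub _ (Rlt_le _ _ c_pos) g_lip _ t_ge0 E_dev) _.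
- by rewrite cardU leq_addl.
- by rewrite cardU; apply: Rmult_lt_0_compat.
rewrite cardU; apply: exp_le; rewrite /Rdiv !Ropp_mult_distr_l_reverse.
apply: Ropp_le_contravar; apply: Rmult_le_compat_l; first by nra.
by apply: Rinv_le_contravar; [nra | apply: Rmult_le_compat_l; lra].
Qed.

Section Complement.
Variable T : finType.
Implicit Types (S : {set T}) (g : {set T} -> R).

Lemma setC_ksub k S : S \in ksub [set: T] k -> ~: S \in ksub [set: T] (#|T| - k).
Proof.
by rewrite !inE !subsetT /= => /eqP cardS; rewrite [#|~: S|]cardsCs setCK cardS.
Qed.

Lemma mean_ksub_setC k g : (k <= #|T|)%nat ->
  mean (ksub [set: T] k) g = mean (ksub [set: T] (#|T| - k)) (fun S => g (~: S)).
Proof.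
move=> k_le; rewrite /mean !card_ksub cardsT bin_sub //.
rewrite (reindex_inj (@setC_inj T)); congr (_ / _); apply: eq_bigl => S.
apply/idP/idP => [/setC_ksub | /setC_ksub]; rewrite ?setCK //.
by rewrite subKn.
Qed.

Lemma swap_lipschitz_setC k c g : (k <= #|T|)%nat ->
  swap_lipschitz [set: T] k c g ->
  swap_lipschitz [set: T] (#|T| - k) c (fun S => g (~: S)).
Proof.
move=> k_le g_lip S x z S_in xS _ zS.
have xz : x != z by apply: contraNneq zS => <-.
have -> : ~: (S :\ x :|: [set z]) = ~: S :\ z :|: [set x].
  apply/setP => w; rewrite !inE; case: (eqVneq w x) => [-> | wx] /=.
    by rewrite xz orbT.
  by rewrite orbF negb_or andbC.
have SC_in := setC_ksub S_in; rewrite subKn // in SC_in.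
by apply: g_lip => //; rewrite inE ?negbK.
Qed.

End Complement.

(* The tail bound for uniform m-subsets of a set of m + u points, by
   [mcdiarmid_ksub] applied to the m-subsets or to their complements. *)
Lemma transductive_mcdiarmid (T : finType) m u c (g : {set T} -> R) t
    (E : pred {set T}) :
  #|T| = (m + u)%nat -> (0 < m)%nat -> (0 < u)%nat -> 0 < c -> 0 <= t ->
  swap_lipschitz [set: T] m c g ->
  (forall S, S \in ksub [set: T] m -> E S -> t <= g S - mean (ksub [set: T] m) g) ->
  mean (ksub [set: T] m) (fun S => if E S then 1 else 0)
  <= exp (- (2 * (t * t)) / (c * c * alpha m u)).
Proof.
move=> cardT m_gt0 u_gt0 c_pos t_ge0 g_lip E_dev.
case: (leqP m u) => [m_le_u | u_lt_m].
  apply: (mcdiarmid_ksub _ m_gt0 m_le_u c_pos t_ge0 g_lip E_dev).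
  by rewrite cardsT cardT addnC.
have m_le : (m <= #|T|)%nat by rewrite cardT leq_addr.
have Tm : (#|T| - m)%nat = u by rewrite cardT addKn.
rewrite alpha_sym mean_ksub_setC // Tm.
apply: (mcdiarmid_ksub (g := fun S => g (~: S)) _ u_gt0 (ltnW u_lt_m) c_pos t_ge0).
- by rewrite cardsT cardT.
- by rewrite -Tm; apply: swap_lipschitz_setC.
move=> S S_in ES; rewrite -Tm -mean_ksub_setC //; apply: E_dev ES.
by move/setC_ksub: S_in; rewrite cardT addnK.
Qed.

Section SwapSymmetry.
Variable T : finType.
Implicit Types (S : {set T}) (q : {set T} * (T * T)).

Definition swap_triple q : {set T} * (T * T) :=
  (q.1 :\ q.2.1 :|: [set q.2.2], (q.2.2, q.2.1)).

Definition swappable k q : bool :=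
  [&& q.1 \in ksub [set: T] k, q.2.1 \in q.1 & q.2.2 \notin q.1].

Lemma card_swap S x z : x \in S -> z \notin S -> #|S :\ x :|: [set z]| = #|S|.
Proof.
move=> xS zS; rewrite setUC cardsU1 (cardsD1 x S) xS !inE negb_and negbK zS.
by rewrite orbT.
Qed.

Lemma swappable_swap k q : swappable k q -> swappable k (swap_triple q).
Proof.
case: q => S [x z]; rewrite /swappable /swap_triple /= !inE !subsetT /=.
case/and3P => cardS xS zS; rewrite card_swap // cardS eqxx orbT eqxx /=.
by apply: contraNneq zS => <-.
Qed.

Lemma swap_tripleK k q : swappable k q -> swap_triple (swap_triple q) = q.
Proof.
case: q => S [x z] /and3P [_ /= xS zS]; rewrite /swap_triple /=; congr pair.
apply/setP => w; rewrite !inE; case: (eqVneq w x) => [-> | wx] /=.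
  by rewrite xS orbT.
by case: (eqVneq w z) => [-> | wz]; rewrite /= ?orbF ?(negbTE zS).
Qed.

Lemma swap_pair_sum k (F : {set T} -> T -> T -> R) :
  \big[Rplus/0]_(S in ksub [set: T] k) \big[Rplus/0]_(x in S)
    \big[Rplus/0]_(z in ~: S) F S x z =
  \big[Rplus/0]_(S in ksub [set: T] k) \big[Rplus/0]_(x in S)
    \big[Rplus/0]_(z in ~: S) F (S :\ x :|: [set z]) z x.
Proof.
have triples (G : {set T} -> T -> T -> R) :
    \big[Rplus/0]_(S in ksub [set: T] k) \big[Rplus/0]_(x in S)
      \big[Rplus/0]_(z in ~: S) G S x z =
    \big[Rplus/0]_(q | swappable k q) G q.1 q.2.1 q.2.2.
  under eq_bigr => S _ do rewrite pair_big_dep.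
  rewrite pair_big_dep; apply: eq_bigl => -[S [x z]] /=.
  by rewrite /swappable /= [z \in ~: S]inE.
rewrite !triples (reindex_onto swap_triple swap_triple); last first.
  by move=> q; apply: (swap_tripleK (k := k)).
apply: eq_bigl => q; apply/andP/idP => [[q_sw /eqP <-] | q_sw].
  exact: swappable_swap.
by rewrite swappable_swap // (swap_tripleK q_sw) eqxx.
Qed.


Lemma swap_loss_sum k (c : {set T} -> T -> R) :
  \big[Rplus/0]_(S in ksub [set: T] k) \big[Rplus/0]_(x in S)
    \big[Rplus/0]_(z in ~: S) (c S z - c S x) =
  \big[Rplus/0]_(S in ksub [set: T] k) \big[Rplus/0]_(x in S)
    \big[Rplus/0]_(z in ~: S) (c S z - c (S :\ x :|: [set z]) z).
Proof.
have triple_sub (F G : {set T} -> T -> T -> R) :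
    \big[Rplus/0]_(S in ksub [set: T] k) \big[Rplus/0]_(x in S)
      \big[Rplus/0]_(z in ~: S) (F S x z - G S x z) =
    \big[Rplus/0]_(S in ksub [set: T] k) \big[Rplus/0]_(x in S)
      \big[Rplus/0]_(z in ~: S) F S x z -
    \big[Rplus/0]_(S in ksub [set: T] k) \big[Rplus/0]_(x in S)
      \big[Rplus/0]_(z in ~: S) G S x z.
  rewrite -bigR_sub; apply: eq_bigr => S _; rewrite -bigR_sub.
  by apply: eq_bigr => x _; rewrite bigR_sub.
rewrite (triple_sub (fun S x z => c S z) (fun S x z => c S x)).
by rewrite (swap_pair_sum k (fun S x z => c S x)) -triple_sub.
Qed.

Lemma swap_setD1 S x z : z \notin S -> (S :\ x :|: [set z]) :\ z = S :\ x.
Proof.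
move=> zS; apply/setP => w; rewrite !inE; case: (eqVneq w z) => [-> | wz] /=.
  by rewrite (negbTE zS) andbF.
by rewrite orbF.
Qed.

Lemma swap_setCD1 S x z : x \in S -> ~: (S :\ x :|: [set z]) :\ x = ~: S :\ z.
Proof.
move=> xS; apply/setP => w; rewrite !inE; case: (eqVneq w x) => [-> | wx] /=.
  by rewrite xS andbF.
by case: (eqVneq w z) => [-> | wz]; rewrite /= ?orbT ?orbF.
Qed.

End SwapSymmetry.

Lemma sum_exchange_gap (T : finType) (A : {set T}) a b (f g : T -> R) K e :
  (forall w, Rabs (f w - g w) <= e) ->
  (forall w, 0 <= f w <= K) -> (forall w, 0 <= g w <= K) ->
  Rabs ((f a + \big[Rplus/0]_(i in A) f i) - (g b + \big[Rplus/0]_(i in A) g i))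
  <= K + INR #|A| * e.
Proof.
move=> fg f_in g_in; apply/Rabs_le_between.
have pointwise w : - e <= f w - g w <= e by apply/Rabs_le_between.
have sum_lo : - (INR #|A| * e) <= \big[Rplus/0]_(i in A) (f i - g i).
  by rewrite -bigR_const -bigR_opp; apply: bigR_le => i _; case: (pointwise i).
have sum_hi : \big[Rplus/0]_(i in A) (f i - g i) <= INR #|A| * e.
  by rewrite -bigR_const; apply: bigR_le => i _; case: (pointwise i).
rewrite bigR_sub in sum_lo sum_hi.
by have := f_in a; have := g_in b; lra.
Qed.

Section Transductive.
Variables (m u : nat) (y : 'I_(m + u) -> R) (H : ('I_(m + u) -> R) -> Prop).
Variables (B beta : R) (L : {set 'I_(m + u)} -> ('I_(m + u) -> R)).
Hypotheses (m_gt0 : (0 < m)%nat) (u_gt0 : (0 < u)%nat).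
Hypotheses (H_bounded : bounded_by y H B) (L_stable : cost_stable m y L beta).
Hypothesis L_in_H : forall S : {set 'I_(m + u)}, #|S| = m -> H (L S).

Local Notation X := [set: 'I_(m + u)].

Definition gen_gap (S : {set 'I_(m + u)}) : R :=
  test_err u y (L S) S - train_err m y (L S) S.

Lemma sumRE (A : {set 'I_(m + u)}) (f : 'I_(m + u) -> R) :
  sumR A f = \big[Rplus/0]_(i in A) f i.
Proof. by []. Qed.

Lemma card_test_set (S : {set 'I_(m + u)}) : #|S| = m -> #|~: S| = u.
Proof. by move=> cardS; rewrite cardsCs setCK card_ord cardS addKn. Qed.

Lemma in_ksub_X (S : {set 'I_(m + u)}) : (S \in ksub X m) = (#|S| == m).
Proof. by rewrite inE subsetT. Qed.

Lemma cost_bounded (S : {set 'I_(m + u)}) z : #|S| = m -> 0 <= cost y (L S) z <= B ^ 2.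
Proof.
move=> cardS; have := H_bounded (L_in_H cardS) z; rewrite /cost -pow2_abs.
by have := Rabs_pos (L S z - y z); nra.
Qed.

(* Stability can only hold with beta >= 0, as some swap is always possible. *)
Lemma beta_ge0 : 0 <= beta.
Proof.
have [S] : exists S, S \in ksub X m.
  by apply/card_gt0P; apply: ksub_gt0; rewrite cardsT card_ord leq_addr.
rewrite in_ksub_X => /eqP cardS.
have [x xS] : exists x, x \in S by apply/card_gt0P; rewrite cardS.
have [z] : exists z, z \in ~: S by apply/card_gt0P; rewrite card_test_set.
rewrite inE => zS; exact: Rle_trans (Rabs_pos _) (L_stable cardS xS zS x).
Qed.

Lemma gen_gap_pair_sum (S : {set 'I_(m + u)}) : #|S| = m ->
  INR m * INR u * gen_gap S = \big[Rplus/0]_(x in S) \big[Rplus/0]_(z in ~: S)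
    (cost y (L S) z - cost y (L S) x).
Proof.
move=> cardS; rewrite /gen_gap /test_err /train_err !sumRE.
set c := cost y (L S).
rewrite [RHS](eq_bigr (fun x => \big[Rplus/0]_(z in ~: S) c z - INR u * c x)); last first.
  by move=> x _; rewrite bigR_sub bigR_const card_test_set.
rewrite bigR_sub bigR_const bigR_scale cardS.
have := INR_pos m_gt0; have := INR_pos u_gt0 => ? ?.
set P := \big[Rplus/0]_(z in ~: S) c z; set Q := \big[Rplus/0]_(i in S) c i.
by field; lra.
Qed.

(* Summing over all training sets, m u E[gen_gap] is an average of
   differences c_S(z) - c_S'(z) between training sets S, S' that differ in
   one point, hence at most m u beta. *)
Lemma mean_gen_gap_le : mean (ksub X m) gen_gap <= beta.
Proof.
have := INR_pos m_gt0; have := INR_pos u_gt0 => u_pos m_pos.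
have KX_pos : 0 < INR #|ksub X m|.
  by apply/INR_pos/ksub_gt0; rewrite cardsT card_ord leq_addr.
have triple_beta : \big[Rplus/0]_(S in ksub X m) \big[Rplus/0]_(x in S)
    \big[Rplus/0]_(z in ~: S) beta = INR m * INR u * (INR #|ksub X m| * beta).
  rewrite (eq_bigr (fun _ => INR m * INR u * beta)) => [|S].
    by rewrite (bigR_const (ksub X m)); ring.
  rewrite in_ksub_X => /eqP cardS.
  rewrite (eq_bigr (fun _ => INR u * beta)) => [|x _].
    by rewrite bigR_const cardS; ring.
  by rewrite bigR_const card_test_set.
have sum_le : INR m * INR u * \big[Rplus/0]_(S in ksub X m) gen_gap S <=
              INR m * INR u * (INR #|ksub X m| * beta).
  rewrite -triple_beta -bigR_scale.
  rewrite (eq_bigr (fun S : {set 'I_(m + u)} => \big[Rplus/0]_(x in S)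
      \big[Rplus/0]_(z in ~: S) (cost y (L S) z - cost y (L S) x))); last first.
    by move=> S; rewrite in_ksub_X => /eqP cardS; rewrite gen_gap_pair_sum.
  rewrite (swap_loss_sum m (fun S => cost y (L S))).
  apply: bigR_le => S; rewrite in_ksub_X => /eqP cardS.
  apply: bigR_le => x xS; apply: bigR_le => z; rewrite inE => zS.
  have := L_stable cardS xS zS z; rewrite Rabs_minus_sym.
  exact: Rle_trans (Rle_abs _).
have {}sum_le : \big[Rplus/0]_(S in ksub X m) gen_gap S <= INR #|ksub X m| * beta.
  by apply: (Rmult_le_reg_l (INR m * INR u)); first exact: Rmult_lt_0_compat.
apply: (Rmult_le_reg_r (INR #|ksub X m|)) => //.
by rewrite /mean /Rdiv Rmult_assoc Rinv_l; lra.
Qed.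

Lemma gen_gap_lipschitz :
  swap_lipschitz X m (2 * beta + B ^ 2 * INR (m + u) / (INR m * INR u)) gen_gap.
Proof.
move=> S x z; rewrite in_ksub_X => /eqP cardS xS _ zS.
set S' := S :\ x :|: [set z].
have cardS' : #|S'| = m by rewrite card_swap.
have := INR_pos m_gt0; have := INR_pos u_gt0 => u_pos m_pos.
have b_ge0 := beta_ge0.
set c1 := cost y (L S); set c2 := cost y (L S').
have c12 w : Rabs (c1 w - c2 w) <= beta.
  by rewrite Rabs_minus_sym; apply: L_stable.
have zC : z \in ~: S by rewrite inE.
have xC : x \in ~: S' by rewrite !inE negb_or negb_and negbK eqxx /=; apply: contraNneq zS => <-.
have zS' : z \in S' by rewrite !inE eqxx orbT.
have card_test : INR #|~: S :\ z| = INR u - 1.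
  by have := f_equal INR (cardsD1 z (~: S)); rewrite zC card_test_set // add1n S_INR; lra.
have card_train : INR #|S :\ x| = INR m - 1.
  by have := f_equal INR (cardsD1 x S); rewrite xS cardS add1n S_INR; lra.
have test_gap := sum_exchange_gap (~: S :\ z) z x c12
  (fun w => cost_bounded w cardS) (fun w => cost_bounded w cardS').
have train_gap := sum_exchange_gap (S :\ x) x z c12
  (fun w => cost_bounded w cardS) (fun w => cost_bounded w cardS').
rewrite card_test in test_gap; rewrite card_train in train_gap.
rewrite /gen_gap /test_err /train_err !sumRE.
rewrite (bigR_setD1 _ zC) (bigR_setD1 _ xC) (bigR_setD1 _ xS) (bigR_setD1 _ zS').
rewrite swap_setCD1 // swap_setD1 // -/c1 -/c2.
set P := c1 z + _; set P' := c2 x + _; set Q := c1 x + _; set Q' := c2 z + _.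
have -> : P / INR u - Q / INR m - (P' / INR u - Q' / INR m) =
          (P - P') / INR u + - ((Q - Q') / INR m) by field; lra.
apply: Rle_trans (Rabs_triang _ _) _; rewrite Rabs_Ropp.
apply: Rle_trans (Rplus_le_compat _ _ _ _ (Rabs_div_le u_pos test_gap)
                                          (Rabs_div_le m_pos train_gap)) _.
have -> : 2 * beta + B ^ 2 * INR (m + u) / (INR m * INR u) =
          (B ^ 2 + (INR u - 1) * beta) / INR u + (B ^ 2 + (INR m - 1) * beta) / INR m
          + (beta / INR u + beta / INR m) by rewrite plus_INR; field; lra.
have : 0 <= beta / INR u + beta / INR m.
  by apply: Rplus_le_le_0_compat; apply: Rmult_le_pos => //; apply/Rinv_ge0; lra.
lra.
Qed.

Lemma gap_constant_pos : 0 < B ->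
  0 < 2 * beta + B ^ 2 * INR (m + u) / (INR m * INR u).
Proof.
move=> B_pos; have := beta_ge0.
have : 0 < B ^ 2 * INR (m + u) / (INR m * INR u).
  apply: Rdiv_lt_0_compat; last by apply: Rmult_lt_0_compat; apply: INR_pos.
  by apply: Rmult_lt_0_compat; [apply: pow_lt | apply: INR_pos; rewrite addn_gt0 m_gt0].
lra.
Qed.

Lemma violation_deviation (S : {set 'I_(m + u)}) t :
  train_err m y (L S) S + beta + t < test_err u y (L S) S ->
  t <= gen_gap S - mean (ksub X m) gen_gap.
Proof.
move=> violated; apply: Rle_trans (_ : _ <= gen_gap S - beta) _.
  by rewrite /gen_gap; lra.
exact/Rplus_le_compat_l/Ropp_le_contravar/mean_gen_gap_le.
Qed.

End Transductive.

Lemma prob_subsets_mean n k (P : {set 'I_n} -> bool) :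
  prob_subsets k P = mean (ksub [set: 'I_n] k) (fun S => if P S then 1 else 0).
Proof.
have ksubE : ksub [set: 'I_n] k = [set S : {set 'I_n} | #|S| == k].
  by apply/setP => S; rewrite !inE subsetT.
rewrite /prob_subsets /mean ksubE -big_mkcondr; congr (_ / _).
rewrite (eq_bigl (mem [set S : {set 'I_n} | (#|S| == k) && P S])).
  by rewrite bigR_const Rmult_1_r.
by move=> S; rewrite !inE.
Qed.

Lemma Rleb_false a b : Rleb a b = false -> b < a.
Proof. by rewrite /Rleb; case: Rle_dec => [// | nab _]; apply: Rnot_le_lt. Qed.

(* At the deviation t = c sqrt(a ln(1/delta) / 2), the bound
   exp(-2 t^2 / (c^2 a)) equals delta when delta < 1 (and is 1 otherwise). *)
Lemma tail_at_level c a delta : 0 < c -> 0 < a -> 0 < delta ->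
  exp (- (2 * (c * sqrt (a * ln (/ delta) / 2) * (c * sqrt (a * ln (/ delta) / 2))))
       / (c * c * a)) <= delta.
Proof.
move=> c_pos a_pos delta_pos.
rewrite (_ : forall r, c * r * (c * r) = c * c * (r * r)); last by move=> r; ring.
case: (Rle_lt_dec 1 delta) => [delta_ge1 | delta_lt1].
  have ln_le0 : ln (/ delta) <= 0.
    case: delta_ge1 => [delta_gt1 | <-]; last by rewrite Rinv_1 ln_1; apply: Rle_refl.
    rewrite -ln_1; apply/Rlt_le/ln_increasing; first exact: Rinv_0_lt_compat.
    by rewrite -Rinv_1; apply: Rinv_lt_contravar; lra.
  rewrite sqrt_neg_0; last by nra.
  have -> : - (2 * (c * c * (0 * 0))) / (c * c * a) = 0 by field; split; lra.
  by rewrite exp_0.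
have ln_pos : 0 < ln (/ delta).
  rewrite -ln_1; apply: ln_increasing; first lra.
  by rewrite -Rinv_1; apply: Rinv_lt_contravar; lra.
rewrite sqrt_sqrt; last by apply: Rmult_le_pos; [nra | lra].
rewrite ln_Rinv; last lra.
have -> : - (2 * (c * c * (a * - ln delta / 2))) / (c * c * a) = ln delta.
  by field; split; lra.
by rewrite exp_ln; lra.
Qed.

Close Scope R_scope.

Theorem theorem8 (m u : nat) (hm : (0 < m)%N) (hu : (0 < u)%N)
  (y : 'I_(m + u) -> R) (H : ('I_(m + u) -> R) -> Prop) (B beta : R)
  (L : {set 'I_(m + u)} -> ('I_(m + u) -> R)) :
  (0 < B)%R ->
  bounded_by y H B ->
  cost_stable m y L beta ->
  (forall S : {set 'I_(m + u)}, #|S| = m -> H (L S)) ->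
  forall delta : R, (0 < delta)%R ->
  (1 - delta <=
   prob_subsets m (fun S =>
     Rleb (test_err u y (L S) S)
          (train_err m y (L S) S + beta
           + (2 * beta + B ^ 2 * INR (m + u) / (INR m * INR u))
             * sqrt (alpha m u * ln (/ delta) / 2))))%R.
Proof.
Open Scope R_scope.
move=> B_pos H_bounded L_stable L_in_H delta delta_pos.
have c_pos := gap_constant_pos hm hu L_stable B_pos.
rewrite prob_subsets_mean mean_indicatorC; last first.
  by apply: ksub_gt0; rewrite cardsT card_ord leq_addr.
apply/Rplus_le_compat_l/Ropp_le_contravar.
apply: Rle_trans (tail_at_level c_pos (alpha_pos hm hu) delta_pos).
apply: (transductive_mcdiarmid (card_ord _) hm hu c_pos).
- by apply: Rmult_le_pos; [lra | apply: sqrt_pos].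
- exact: (gen_gap_lipschitz hm hu H_bounded L_stable L_in_H).
- move=> S _ /negbTE/Rleb_false.
  exact: (violation_deviation hm hu L_stable).
Qed.
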